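(* In the setting of the context, let $M$ be the central equidistant of $P$. Then the mixed area $$A(M,M)=\frac12\sum_{i=1}^{2n}[M_i,M_{i+1}-M_i]$$ is non-positive.
   Context: $[x,y]$ denotes the determinant of the matrix with columns $x,y\in\mathbb{R}^2$. Fix $n\ge2$; indices are read modulo $2n$. $U$ is a convex $2n$-gon with distinct vertices $U_1,\dots,U_{2n}$ in counterclockwise order with $U_{i+n}=-U_i$. Let $c>0$ and let $P$ be a convex polygon with nonempty interior and vertex list $P_1,\dots,P_{2n}$ (consecutive entries may coincide) with $P_{i+1}-P_i$ a nonnegative multiple of $U_{i+1}-U_i$ and $P_i-P_{i+n}=2cU_i$ for all $i$ (a polygon of constant width in the norm with unit ball $U$). The central equidistant $M$ of $P$ has vertices $M_i=\frac12(P_i+P_{i+n})$. *)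

From HB Require Import structures.
From mathcomp Require Import all_boot all_order all_algebra.
Set Implicit Arguments. Unset Strict Implicit. Unset Printing Implicit Defensive.
Import Order.TTheory GRing.Theory Num.Theory.
Local Open Scope ring_scope.

(* Points of R^2 are pairs; polygons are 2n-periodic maps nat -> R^2
   (indices read modulo 2n). *)

Definition det2 {R : pzRingType} (x y : R * R) : R := x.1 * y.2 - x.2 * y.1.

Definition vsub {R : pzRingType} (x y : R * R) : R * R := (x.1 - y.1, x.2 - y.2).
Definition vadd {R : pzRingType} (x y : R * R) : R * R := (x.1 + y.1, x.2 + y.2).
Definition vscale {R : pzRingType} (a : R) (x : R * R) : R * R := (a * x.1, a * x.2).

Definition periodic {T : Type} (m : nat) (V : nat -> T) : Prop :=
  forall i, V (i + m)%N = V i.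

(* V_0, ..., V_(m-1) are the vertices of a (strictly) convex m-gon, listed in
   counterclockwise order: every other vertex lies strictly to the left of the
   directed edge V_i -> V_(i+1).  (This forces distinct vertices.) *)
Definition strictly_convex_ccw {R : numDomainType} (m : nat) (V : nat -> R * R) : Prop :=
  forall i j : nat, (i < m)%N -> (j < m)%N -> j <> i -> j <> ((i + 1) %% m)%N ->
    0 < det2 (vsub (V (i + 1)%N) (V i)) (vsub (V j) (V i)).

(* Weak convexity (counterclockwise) of a vertex list in which consecutive
   entries may coincide. *)
Definition convex_ccw {R : numDomainType} (m : nat) (V : nat -> R * R) : Prop :=
  forall i j : nat, 0 <= det2 (vsub (V (i + 1)%N) (V i)) (vsub (V j) (V i)).

Definition nonempty_interior {R : numDomainType} (m : nat) (V : nat -> R * R) : Prop :=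
  exists i j k : nat, det2 (vsub (V j) (V i)) (vsub (V k) (V i)) != 0.

Definition central_equidistant {R : numFieldType} (n : nat) (P : nat -> R * R) : nat -> R * R :=
  fun i => vscale (2^-1) (vadd (P i) (P (i + n)%N)).

Definition mixed_area_self {R : numFieldType} (m : nat) (M : nat -> R * R) : R :=
  2^-1 * \sum_(i < m) det2 (M i) (vsub (M (i.+1)) (M i)).

From HB Require Import structures.
From mathcomp Require Import all_boot all_order all_algebra.
From mathcomp Require Import ring lra zify.
Import Order.TTheory GRing.Theory Num.Theory.
Local Open Scope ring_scope.

(* Since [P_i - P_(i+n) = 2c U_i], the equidistant is [M = P - cU]: a closed
   n-gon (it is n-periodic) whose i-th edge is parallel to the edge
   [U_(i+1) - U_i] of U, and by central symmetry and strict convexity of U the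
   first n edge directions of U turn counterclockwise by a total angle less
   than pi.  The signed area of such a polygon is nonpositive, by induction on
   the number of edges: cutting off the last corner and then sliding the
   vertices [M_1, ..., M_(N-1)] along the first edge direction produces a
   closed polygon of the same kind with one edge less, and twice the signed
   area drops by [t^2 [f, g] [e, g] / [e, f] >= 0], where [e, f, g] are the
   first, second-to-last and last edge directions and [t e] is the last edge. *)

Definition edge {R : pzRingType} (M : nat -> R * R) (j : nat) : R * R :=
  vsub (M j.+1) (M j).

Definition shoelace {R : pzRingType} (N : nat) (M : nat -> R * R) : R :=
  \sum_(0 <= i < N) det2 (M i) (M i.+1).

Definition cut_corner {T : Type} (N : nat) (M : nat -> T) (j : nat) : T :=
  if (j < N)%N then M j else M N.+1.

Definition shift_interior {R : pzRingType} (N : nat) (v : R * R)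
    (M : nat -> R * R) (j : nat) : R * R :=
  if (0 < j < N)%N then vadd (M j) v else M j.

Section PlaneAlgebra.
Context {R : comPzRingType}.
Implicit Types (p q r e f g y v x z : R * R).

Lemma vsub_eq_vadd x y z : vsub x y = z -> x = vadd y z.
Proof.
by case: x y z => [? ?] [? ?] [? ?] [<- <-]; rewrite /vadd /=; congr (_, _); ring.
Qed.

Lemma vsub_vadd2r x y v : vsub (vadd x v) (vadd y v) = vsub x y.
Proof.
by case: x y v => [? ?] [? ?] [? ?]; rewrite /vsub /vadd /=; congr (_, _); ring.
Qed.

Lemma vsub_vadd_scale x y e m b :
  vsub x y = vscale m e -> vsub (vadd x (vscale b e)) y = vscale (m + b) e.
Proof.
move=> /vsub_eq_vadd ->; case: y e => [? ?] [? ?].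
by rewrite /vsub /vadd /vscale /=; congr (_, _); ring.
Qed.

Lemma det2_vsub_base p q r : det2 (vsub q p) (vsub r q) = det2 (vsub q p) (vsub r p).
Proof. by case: p q r => [? ?] [? ?] [? ?]; rewrite /det2 /=; ring. Qed.

Lemma det2_vsubr_self x y : det2 x (vsub y x) = det2 x y.
Proof. by case: x y => [? ?] [? ?]; rewrite /det2 /=; ring. Qed.

Lemma det2_antipodal_edge (u0 u1 q : R * R) :
  det2 (vsub (vscale (-1) u1) (vscale (-1) u0)) (vsub q (vscale (-1) u0))
  = det2 (vsub u1 u0) (vsub (vscale (-1) u1) q).
Proof. by case: u0 u1 q => [? ?] [? ?] [? ?]; rewrite /det2 /=; ring. Qed.

Lemma det2_grassmann_plucker e f g y :
  det2 e f * det2 g y + det2 f g * det2 e y = det2 e g * det2 f y.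
Proof. by case: e f g y => [? ?] [? ?] [? ?] [? ?]; rewrite /det2 /=; ring. Qed.

Lemma shoelace_cut_corner N (M : nat -> R * R) : (0 < N)%N ->
  shoelace N.+1 M = shoelace N (cut_corner N M)
                    + det2 (vsub (M N) (M N.-1)) (vsub (M N.+1) (M N.-1)).
Proof.
case: N => // N _; rewrite /shoelace !big_nat_recr //=.
have -> : \sum_(0 <= i < N) det2 (cut_corner N.+1 M i) (cut_corner N.+1 M i.+1)
          = \sum_(0 <= i < N) det2 (M i) (M i.+1).
  by apply: eq_big_nat => i /andP[_ iN]; rewrite /cut_corner !ltnS (ltnW iN) iN.
rewrite /cut_corner ltnSn ltnn.
by case: (M N) (M N.+1) (M N.+2) => [? ?] [? ?] [? ?]; rewrite /det2 /=; ring.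
Qed.

Lemma shoelace_shift_interior N v (M : nat -> R * R) : (1 < N)%N -> M N = M 0%N ->
  shoelace N (shift_interior N v M) = shoelace N M + det2 v (vsub (M N.-1) (M 1%N)).
Proof.
case: N => [|[|N]] // _ closed.
rewrite /shoelace !(big_ltn (ltn0Sn N.+1)) !(@big_nat_recr _ _ _ N.+1 1) //=.
have middle : \sum_(1 <= i < N.+1) det2 (shift_interior N.+2 v M i)
                                        (shift_interior N.+2 v M i.+1)
    = \sum_(1 <= i < N.+1) det2 (M i) (M i.+1) + (det2 v (M N.+1) - det2 v (M 1%N)).
  rewrite -(@telescope_sumr _ 1 N.+1 (fun i => det2 v (M i))) // -big_split.
  apply: eq_big_nat => i /andP[i_gt0 iN].
  rewrite /shift_interior i_gt0 (ltn_trans iN) //= ltnS iN.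
  by case: (M i) (M i.+1) v => [? ?] [? ?] [? ?]; rewrite /det2 /=; ring.
rewrite {}middle /shift_interior /= ltnSn ltnn closed.
by case: (M 0%N) (M 1%N) (M N.+1) v => [? ?] [? ?] [? ?] [? ?]; rewrite /det2 /=; ring.
Qed.

Lemma shoelace_double n (M : nat -> R * R) :
  periodic n M -> shoelace (2 * n) M = shoelace n M *+ 2.
Proof.
move=> Mn; rewrite /shoelace mul2n -addnn (@big_cat_nat _ _ _ n) ?leq_addr //= mulr2n.
congr (_ + _); rewrite -{1}(add0n n) big_addn addnK.
by apply: eq_big_nat => i _; rewrite -addSn !Mn.
Qed.

Lemma shoelace_cut_shift {N} v {M : nat -> R * R} : (1 < N)%N -> M N.+1 = M 0%N ->
  shoelace N.+1 M = shoelace N (shift_interior N v (cut_corner N M))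
    + (det2 (vsub (M N) (M N.-1)) (vsub (M 0%N) (M N.-1))
       - det2 v (vsub (M N.-1) (M 1%N))).
Proof.
move=> N_gt1 closed; have N_gt0 := ltnW N_gt1.
rewrite shoelace_cut_corner // shoelace_shift_interior //; last first.
  by rewrite /cut_corner ltnn N_gt0.
by rewrite /cut_corner N_gt1 ltn_predL N_gt0 closed; ring.
Qed.

End PlaneAlgebra.

Section ClosedPolygonArea.
Context {R : realFieldType}.
Implicit Types (p q r e f g : R * R).

Lemma last_edge_parallel {p q r e f g} {a t : R} : det2 e f != 0 ->
  vsub r q = vscale a f -> vsub p r = vscale t g ->
  vsub p (vadd q (vscale (t * det2 g f / det2 e f) e))
  = vscale (a + t * det2 e g / det2 e f) f.
Proof.
move=> ef_neq0 /vsub_eq_vadd -> /vsub_eq_vadd ->.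
move: ef_neq0; case: q e f g => [? ?] [? ?] [? ?] [? ?] ef_neq0.
by rewrite /det2 /vsub /vadd /vscale /= in ef_neq0 *; congr (_, _); field.
Qed.

Lemma corner_defect_le0 {p0 p1 q r e f g} {m0 a t : R} :
  0 < det2 e f -> 0 < det2 e g -> 0 < det2 f g ->
  vsub p1 p0 = vscale m0 e -> vsub r q = vscale a f -> vsub p0 r = vscale t g ->
  det2 (vsub r q) (vsub p0 q)
  - det2 (vscale (t * det2 g f / det2 e f) e) (vsub q p1) <= 0.
Proof.
move=> ef_gt0 eg_gt0 fg_gt0 /vsub_eq_vadd -> /vsub_eq_vadd -> /vsub_eq_vadd ->.
rewrite [X in X <= 0](_ : _ = - (t ^+ 2 * det2 f g * det2 e g / det2 e f)).
  rewrite oppr_le0; apply/divr_ge0/ltW/ef_gt0.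
  by apply/mulr_ge0/ltW/eg_gt0; apply/mulr_ge0/ltW/fg_gt0; apply: sqr_ge0.
move/lt0r_neq0: ef_gt0 => ef_neq0; clear eg_gt0 fg_gt0.
move: ef_neq0; case: q e f g => [? ?] [? ?] [? ?] [? ?] ef_neq0.
by rewrite /det2 /vsub /vadd /vscale /= in ef_neq0 *; field.
Qed.

Lemma shoelace_closed_le0 (d M : nat -> R * R) N : (1 < N)%N ->
  (forall k, (0 < k < N)%N -> 0 < det2 (d 0%N) (d k)) ->
  (forall k, (0 < k < N)%N -> 0 < det2 (d k.-1) (d k)) ->
  (forall j, (j < N)%N -> exists mu, edge M j = vscale mu (d j)) ->
  M N = M 0%N -> shoelace N M <= 0.
Proof.
elim: N M => // N IH M; rewrite ltnS leq_eqVlt.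
case/orP=> [/eqP <- | N_gt1] turn0 turn edgeM closed.
  suff -> : shoelace 2 M = 0 by [].
  rewrite /shoelace !big_nat_recr //= big_geq // closed.
  by case: (M 0%N) (M 1%N) => [? ?] [? ?]; rewrite /det2 /=; ring.
have N_gt0 : (0 < N)%N := ltnW N_gt1.
have [m0 e0] := edgeM 0%N isT.
have [a eA] := edgeM N.-1 ltac:(lia).
have [t eB] := edgeM N (ltnSn N).
rewrite /edge (prednK N_gt0) in eA; rewrite /edge closed in eB.
have ef := turn0 N.-1 ltac:(lia).
have eg := turn0 N ltac:(lia).
have fg := turn N ltac:(lia).
set alpha := t * det2 (d N) (d N.-1) / det2 (d 0%N) (d N.-1).
pose v := vscale alpha (d 0%N).
pose M' := shift_interior N v (cut_corner N M).
have M'0 : M' 0%N = M 0%N by rewrite /M' /shift_interior /cut_corner N_gt0.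
have M'N : M' N = M 0%N by rewrite /M' /shift_interior /cut_corner ltnn andbF.
have M'_interior j : (0 < j < N)%N -> M' j = vadd (M j) v.
  by move=> jN; rewrite /M' /shift_interior /cut_corner jN; case/andP: jN => _ ->.
have area := shoelace_cut_shift v N_gt1 closed.
have IHM' : shoelace N M' <= 0.
  apply: IH => //.
  - by move=> k kN; apply: turn0; lia.
  - by move=> k kN; apply: turn; lia.
  - move=> j jN; case: (posnP j) => [-> | j_gt0].
      exists (m0 + alpha); rewrite /edge M'0 M'_interior ?N_gt1 //.
      exact: vsub_vadd_scale.
    have [jN1 | ->] : (j.+1 < N)%N \/ j = N.-1 by lia.
      have [mu emu] := edgeM j ltac:(lia).
      by exists mu; rewrite /edge !M'_interior ?vsub_vadd2r //; lia.
    exists (a + t * det2 (d 0%N) (d N) / det2 (d 0%N) (d N.-1)).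
    rewrite /edge (prednK N_gt0) M'N M'_interior; last lia.
    by apply: last_edge_parallel eA eB; rewrite lt0r_neq0.
  - by rewrite M'N M'0.
have := corner_defect_le0 ef eg fg e0 eA eB.
rewrite area; lra.
Qed.

End ClosedPolygonArea.

Lemma det2_gt0_trans (R : numDomainType) (e f g y : R * R) :
  0 < det2 e f -> 0 < det2 f g ->
  0 < det2 e y -> 0 < det2 f y -> 0 < det2 g y -> 0 < det2 e g.
Proof.
move=> ef fg ey fy gy; rewrite -(pmulr_lgt0 _ fy) -det2_grassmann_plucker.
by rewrite addr_gt0 ?mulr_gt0.
Qed.

Section StrictlyConvexPolygon.
Context {R : numDomainType} {n : nat} {U : nat -> R * R}.
Hypothesis convexU : strictly_convex_ccw (2 * n) U.

Lemma left_of_edge i j : (i.+1 < 2 * n)%N -> (j < 2 * n)%N -> j <> i -> j <> i.+1 ->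
  0 < det2 (edge U i) (vsub (U j) (U i)).
Proof.
move=> i_lt j_lt ji ji1; rewrite /edge -addn1.
apply: convexU => //; first lia.
by rewrite modn_small addn1.
Qed.

Lemma edge_turn_gt0 k : (k.+2 < 2 * n)%N -> 0 < det2 (edge U k) (edge U k.+1).
Proof. by move=> k_lt; rewrite /edge det2_vsub_base; apply: left_of_edge; lia. Qed.

Hypothesis symU : forall i, U (i + n)%N = vscale (-1) (U i).

(* The point [U_(n+1) = -U_1] witnesses each step of the induction: it lies to
   the left of the edges [U_(k+1) U_(k+2)] and [U_(k+2) U_(k+3)], and
   [U_(k+2)] lies to the left of [U_n U_(n+1)], the reflected first edge. *)
Lemma first_edge_turn_gt0 k : (k.+1 < n)%N -> 0 < det2 (edge U 0) (edge U k.+1).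
Proof.
elim: k => [|k IH] k_lt; first by apply: edge_turn_gt0; lia.
have Un : U n = vscale (-1) (U 0%N) by rewrite -symU add0n.
have Un1 : U n.+1 = vscale (-1) (U 1%N) by rewrite -symU add1n.
apply: (@det2_gt0_trans _ _ _ _ (vsub (U n.+1) (U k.+2))).
- by apply: IH; lia.
- by apply: edge_turn_gt0; lia.
- have := left_of_edge n k.+2 ltac:(lia) ltac:(lia) ltac:(lia) ltac:(lia).
  by rewrite /edge Un Un1 det2_antipodal_edge.
- by rewrite /edge det2_vsub_base; apply: left_of_edge; lia.
- by apply: left_of_edge; lia.
Qed.

End StrictlyConvexPolygon.

Section CentralEquidistant.
Context {R : numFieldType}.

Lemma central_equidistantE {n} {P U : nat -> R * R} {c : R} :
    (forall i, vsub (P i) (P (i + n)%N) = vscale (2 * c) (U i)) ->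
  forall i, central_equidistant n P i = vsub (P i) (vscale c (U i)).
Proof.
move=> width i; move/vsub_eq_vadd: (width i); rewrite /central_equidistant => ->.
case: (P (i + n)%N) (U i) => [? ?] [? ?]; rewrite /vscale /vadd /vsub /=.
by congr (_, _); field.
Qed.

Lemma central_equidistant_periodic n (P : nat -> R * R) :
  periodic (2 * n) P -> periodic n (central_equidistant n P).
Proof.
move=> Pper i; rewrite /central_equidistant -addnA addnn -mul2n Pper.
by case: (P i) (P (i + n)%N) => [? ?] [? ?]; rewrite /vscale /vadd /=; congr (_, _); ring.
Qed.

Lemma mixed_area_self_periodic n (M : nat -> R * R) :
  periodic n M -> mixed_area_self (2 * n) M = shoelace n M.
Proof.
move=> Mn; rewrite /mixed_area_self.
rewrite -(big_mkord xpredT (fun i => det2 (M i) (vsub (M i.+1) (M i)))).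
under eq_bigr do rewrite det2_vsubr_self.
by rewrite -/(shoelace _ M) shoelace_double // mulr2n; field.
Qed.

End CentralEquidistant.

Theorem lemma3p3 (R : realFieldType) (n : nat) (U P : nat -> R * R) (c : R) :
  (2 <= n)%N ->
  periodic (2 * n) U ->
  strictly_convex_ccw (2 * n) U ->
  (forall i, U (i + n)%N = vscale (-1) (U i)) ->
  0 < c ->
  periodic (2 * n) P ->
  convex_ccw (2 * n) P ->
  nonempty_interior (2 * n) P ->
  (forall i, exists2 lam : R, 0 <= lam &
     vsub (P i.+1) (P i) = vscale lam (vsub (U i.+1) (U i))) ->
  (forall i, vsub (P i) (P (i + n)%N) = vscale (2 * c) (U i)) ->
  mixed_area_self (2 * n) (central_equidistant n P) <= 0.
Proof.
move=> n_ge2 _ convexU symU _ Pper _ _ edgeP width.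
have Mper : periodic n (central_equidistant n P) by exact: central_equidistant_periodic.
set M := central_equidistant n P in Mper *.
have edgeM j : exists mu, edge M j = vscale mu (edge U j).
  have [lam _ /vsub_eq_vadd edgePj] := edgeP j; exists (lam - c).
  rewrite /edge /M !(central_equidistantE width) edgePj.
  case: (P j) (U j) (U j.+1) => [? ?] [? ?] [? ?].
  by rewrite /vsub /vadd /vscale /=; congr (_, _); ring.
rewrite mixed_area_self_periodic //.
apply: (shoelace_closed_le0 (edge U)) => //.
- move=> k /andP[k_gt0 k_lt]; rewrite -(prednK k_gt0).
  by apply: (first_edge_turn_gt0 convexU symU); lia.
- move=> k /andP[k_gt0 k_lt]; rewrite -{2}(prednK k_gt0).
  by apply: (edge_turn_gt0 convexU); lia.
- by rewrite -[in LHS](add0n n) Mper.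
Qed.
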